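(* Let $G$ be a finite group, let $\gamma$ be a faithful $n$-dimensional complex representation of $G$ with character $\chi_\gamma$, and let $e=c_0,c_1,\dots,c_\ell$ be a set of representatives of the conjugacy classes of $G$. Then \[ \frac{1}{|G|}\prod_{i=1}^{\ell}\bigl(n-\chi_\gamma(c_i)\bigr)=|K(\gamma)|. \] In particular the left-hand side is a positive integer.
   Context: Let $G$ be a finite group with irreducible complex characters $\chi_0,\chi_1,\dots,\chi_\ell$, where $\chi_0$ is the trivial character (so $\ell+1$ is the number of conjugacy classes of $G$). For a faithful $n$-dimensional complex representation $\gamma$ of $G$ with character $\chi_\gamma$, let $M=(m_{ij})\in\mathbb{Z}^{(\ell+1)\times(\ell+1)}$ be defined by $\chi_\gamma\cdot\chi_i=\sum_{j=0}^{\ell}m_{ij}\chi_j$. The extended McKay–Cartan matrix is $\tilde C:=nI-M$, and the McKay–Cartan matrix $C$ is the $\ell\times\ell$ matrix obtained from $\tilde C$ by deleting the row and column indexed by $\chi_0$. The critical group of $\gamma$ is the finite abelian group $K(\gamma):=\operatorname{coker}(C^t:\mathbb{Z}^\ell\to\mathbb{Z}^\ell)$; equivalently $\operatorname{coker}(\tilde C^t:\mathbb{Z}^{\ell+1}\to\mathbb{Z}^{\ell+1})\cong\mathbb{Z}\oplus K(\gamma)$. *)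

From HB Require Import structures.
From mathcomp Require Import all_boot all_order all_algebra all_fingroup all_solvable all_field all_character.
Set Implicit Arguments. Unset Strict Implicit. Unset Printing Implicit Defensive.
Import Order.TTheory GRing.Theory Num.Theory.
Local Open Scope ring_scope.

Lemma succ_lt_pred (m : nat) (i : 'I_m.-1) : (i.+1 < m)%N.
Proof. by case: m i => [|m] [i /= hi]. Qed.

Definition ordS_pred (m : nat) (i : 'I_m.-1) : 'I_m := Ordinal (succ_lt_pred i).

Definition delete0 (R : Type) (m : nat) (A : 'M[R]_m) : 'M[R]_m.-1 :=
  \matrix_(i, j) A (ordS_pred i) (ordS_pred j).

Definition ext_mckay_cartan (m n : nat) (M : 'M[int]_m) : 'M[int]_m :=
  (n%:Z)%:M - M.
Definition mckay_cartan (m n : nat) (M : 'M[int]_m) : 'M[int]_m.-1 :=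
  delete0 (ext_mckay_cartan n M).

Definition in_image (m : nat) (A : 'M[int]_m) (v : 'cV[int]_m) : Prop :=
  exists x : 'cV[int]_m, v = A *m x.

(* The cokernel Z^m / A Z^m is finite of order k: there are k representatives
   meeting every coset exactly once. *)
Definition coker_order (m : nat) (A : 'M[int]_m) (k : nat) : Prop :=
  exists r : 'I_k -> 'cV[int]_m,
    (forall v : 'cV[int]_m, exists i : 'I_k, in_image A (v - r i)) /\
    (forall i j : 'I_k, in_image A (r i - r j) -> i = j).

(* The character table X of G diagonalises the extended McKay-Cartan matrix:
   C~ X = X diag(n - chi_gamma(c_j)), with eigenvalue 0 at the identity class.
   Deleting the trivial row and column turns the determinant into
   det (C~ + E_00) - det C~, and E_00 X = X u 1^T where u lists the class sizes
   divided by |G| (column orthogonality), so a rank-one determinant formula gives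
   det C = |G|^-1 prod_(i >= 1) (n - chi_gamma(c_i)).  This product is positive:
   by faithfulness its factors are non-zero with non-negative real part, and
   c |-> c^-1 pairs each factor with its complex conjugate.  Finally, by the
   Smith normal form, the cokernel of an integer matrix of non-zero determinant
   has order |det|. *)

From HB Require Import structures.
From mathcomp Require Import all_boot all_order all_algebra all_fingroup all_solvable all_field all_character.
Set Implicit Arguments. Unset Strict Implicit. Unset Printing Implicit Defensive.
Import Order.TTheory GRing.Theory Num.Theory.
Local Open Scope ring_scope.

Section IntegerCokernel.

Variable m : nat.
Implicit Types (A L R : 'M[int]_m) (v w : 'cV[int]_m).

Lemma coker_order_enum (T : finType) A (r : T -> 'cV[int]_m) :
    (forall v, exists t, in_image A (v - r t)) ->
    (forall s t, in_image A (r s - r t) -> s = t) ->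
  coker_order A #|T|.
Proof.
move=> r_cover r_inj; exists (fun i => r (enum_val i)); split.
  by move=> v; have [t At] := r_cover v; exists (enum_rank t); rewrite enum_rankK.
by move=> i j /r_inj/enum_val_inj.
Qed.

Lemma in_image_unit_mulmx L A R v : L \in unitmx -> R \in unitmx ->
  in_image (L *m A *m R) v <-> in_image A (invmx L *m v).
Proof.
move=> uL uR; split=> [[x ->]|[y Ey]].
  by exists (R *m x); rewrite -!mulmxA mulKmx.
by exists (invmx R *m y); rewrite -!mulmxA mulKVmx // -Ey mulKVmx.
Qed.

Lemma coker_order_unit_mulmx L A R k : L \in unitmx -> R \in unitmx ->
  coker_order A k -> coker_order (L *m A *m R) k.
Proof.
move=> uL uR [r [r_cover r_inj]]; exists (fun i => L *m r i); split=> [v|i j].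
  have [i Ai] := r_cover (invmx L *m v); exists i.
  by apply/in_image_unit_mulmx; rewrite // mulmxBr mulKmx.
by move/in_image_unit_mulmx => /(_ uL uR); rewrite mulmxBr !mulKmx //; apply: r_inj.
Qed.

Lemma in_image_diagP (d : 'I_m -> int) w :
  in_image (diag_mx (\row_i d i)) w <-> forall i, w i 0 \in dvdz (d i).
Proof.
split=> [[x ->] i|dvd_dw].
  by rewrite mul_diag_mx !mxE dvdz_mulr.
exists (\col_i divz (w i 0) (d i)); apply/matrixP=> i j.
by rewrite ord1 mul_diag_mx !mxE mulrC divzK.
Qed.

Lemma coker_order_diag (d : 'I_m -> int) : (forall i, d i != 0) ->
  coker_order (diag_mx (\row_i d i)) (\prod_i `|d i|)%N.
Proof.
move=> d_neq0.
pose T := fprod (fun i : 'I_m => 'I_`|d i|).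
have -> : (\prod_i `|d i|)%N = #|T|.
  by rewrite card_fprod; apply: eq_bigr => i _; rewrite card_ord.
pose r (t : T) := \col_i (t i : int).
apply: (coker_order_enum (r := r)) => [v|s t /in_image_diagP dvd_st].
  pose x i := v i 0.
  have mod_lt i : (`|(x i %% d i)%Z| < `|d i|)%N.
    by rewrite -ltz_nat gez0_abs ?modz_ge0 ?ltz_mod.
  pose t : T := [fprod i => Ordinal (mod_lt i)].
  exists t; apply/in_image_diagP => i; apply/dvdz_mod0P.
  rewrite !mxE fprodE /= gez0_abs ?modz_ge0 //.
  by rewrite -/(x i) {1}(divz_eq (x i) (d i)) addrK modzMl.
apply/fprodP => i; apply/val_inj/eqP; rewrite -eqz_nat.
have small (u : T) : ((u i : int) %% d i)%Z = u i.
  by rewrite -modz_abs modz_small // ltz_nat ltn_ord.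
by move: (dvd_st i); rewrite !mxE -eqz_mod_dvd !small.
Qed.

Lemma absz_det_unitmx L : L \in unitmx -> `|\det L|%N = 1%N.
Proof. by rewrite unitmxE qualifE /GRing.unit_pred /= => /orP[] /eqP->. Qed.

Lemma coker_order_det A : \det A != 0 -> coker_order A `|\det A|%N.
Proof.
have [L uL [R uR [d _ ->]]] := int_Smith_normal_form A.
set D := \matrix_(i, j) _; have -> : D = diag_mx (\row_i d`_i).
  by apply/matrixP=> i j; rewrite !mxE.
rewrite !det_mulmx det_diag !abszM !absz_det_unitmx // mul1n muln1.
under eq_bigr do rewrite mxE.
rewrite (big_morph absz abszM (erefl : `|1|%N = 1%N)) => det_neq0.
apply: coker_order_unit_mulmx => //; apply: coker_order_diag => i.
by apply: contraNneq det_neq0 => di0; rewrite (bigD1 i) //= di0 mul0r mulr0 mul0r.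
Qed.

End IntegerCokernel.

Section Determinants.

Variable R : comNzRingType.

Lemma det_delete0 m (A : 'M[R]_m.+1) :
  \det (delete0 A) = \det (A + delta_mx 0 0) - \det A.
Proof.
have cofactor_e00 j : cofactor (A + delta_mx 0 0) 0 j = cofactor A 0 j.
  rewrite /cofactor; congr (_ * \det _); apply/matrixP=> k l.
  by rewrite !mxE eq_sym (negbTE (neq_lift 0 k)) addr0.
rewrite (expand_det_row (A + delta_mx 0 0) 0) (expand_det_row A 0).
under eq_bigr do rewrite cofactor_e00 mxE mulrDl.
rewrite big_split /= addrC addrK (bigD1 0) //= big1 ?addr0 => [|j nj0].
  rewrite mxE !eqxx mul1r /cofactor expr0 mul1r; congr (\det _).
  by apply/matrixP=> k l; rewrite !mxE; congr (A _ _); apply: val_inj.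
by rewrite mxE eqxx (negbTE nj0) mul0r.
Qed.

Lemma det_row_col_perm m (s : 'S_m) (A : 'M[R]_m) :
  \det (row_perm s (col_perm s A)) = \det A.
Proof.
rewrite row_permE col_permE !det_mulmx !det_perm odd_permV.
by rewrite mulrCA -expr2 sqrr_sign mulr1.
Qed.

(* The rank-one update is absorbed into the zero diagonal entry: with [k = 0],
   [diag_mx lam + u *m v] factors as a lower triangular matrix with column 0
   equal to [u] times an upper triangular one with row 0 equal to [v]. *)
Lemma det_diag_mx_add_rank1_0 m (lam : 'rV[R]_m.+1) (u : 'cV_m.+1) (v : 'rV_m.+1) :
    lam 0 0 = 0 ->
  \det (diag_mx lam + u *m v) = u 0 0 * v 0 0 * \prod_(j | j != 0) lam 0 j.
Proof.
move=> lam00.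
pose e0 : 'cV[R]_m.+1 := delta_mx 0 0.
pose B := diag_mx lam + u *m e0^T.
pose E := 1%:M + e0 *m (v - e0^T).
have -> : diag_mx lam + u *m v = B *m E.
  have lam_e0 : diag_mx lam *m e0 = 0.
    apply/matrixP=> i j; rewrite mul_diag_mx !mxE.
    by case: eqP => [->|]; rewrite ?lam00 ?mul0r ?mulr0.
  have e0e0 : e0^T *m e0 = 1%:M.
    by rewrite trmx_delta mul_delta_mx; apply/matrixP=> a b; rewrite !ord1 !mxE.
  rewrite /B /E mulmxDr mulmx1 mulmxDl !mulmxA lam_e0 mul0mx add0r.
  by rewrite -(mulmxA u) e0e0 mulmx1 -addrA -mulmxDr (addrC e0^T) subrK.
have ltn_neq (i j : 'I_m.+1) : (i < j)%N -> (i == j) = false /\ (j == 0) = false.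
  move=> lt_ij; rewrite -!(inj_eq val_inj) /= ltn_eqF //.
  by rewrite gtn_eqF // (leq_ltn_trans _ lt_ij).
have trigB : is_trig_mx B.
  apply/is_trig_mxP => i j /ltn_neq[ij j0].
  by rewrite !mxE big_ord1 !mxE ij j0 mulr0 addr0.
have trigEt : is_trig_mx E^T.
  apply/is_trig_mxP => i j /ltn_neq[ij j0].
  by rewrite !mxE big_ord1 !mxE eq_sym ij j0 mul0r addr0.
rewrite det_mulmx -(det_tr E) !det_trig // (bigD1 0) //.
rewrite [in X in _ * X](bigD1 0) // [in X in _ * X]big1 /= => [|i i0].
  rewrite mulr1 mulrAC; congr (_ * _ * _).
  - by rewrite !mxE big_ord1 !mxE !eqxx lam00 add0r mulr1.
  - by rewrite !mxE big_ord1 !mxE !eqxx mulr1n mul1r addrC subrK.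
  - apply: eq_bigr => i i0.
    by rewrite !mxE big_ord1 !mxE eqxx (negbTE i0) mulr0 addr0 mulr1n.
by rewrite !mxE big_ord1 !mxE eqxx (negbTE i0) mul0r addr0.
Qed.

Lemma det_diag_mx_add_rank1 m (lam : 'rV[R]_m) (u : 'cV_m) (v : 'rV_m) k :
    lam 0 k = 0 ->
  \det (diag_mx lam + u *m v) = u k 0 * v 0 k * \prod_(j | j != k) lam 0 j.
Proof.
case: m lam u v k => [|m] lam u v k lam_k0; first by case: k lam_k0.
pose s := tperm 0 k.
have s0 : s 0 = k by rewrite tpermL.
rewrite -(det_row_col_perm s).
have -> : row_perm s (col_perm s (diag_mx lam + u *m v)) =
          diag_mx (col_perm s lam) + row_perm s u *m col_perm s v.
  apply/matrixP=> i j; rewrite !mxE (inj_eq perm_inj); congr (_ + _).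
  by apply: eq_bigr => l _; rewrite !mxE.
rewrite det_diag_mx_add_rank1_0 ?mxE ?s0 //; congr (_ * _).
rewrite [RHS](reindex_inj (@perm_inj _ s)); apply: eq_big => [j|j _]; last by rewrite mxE.
by rewrite -s0 (inj_eq perm_inj).
Qed.

End Determinants.

Lemma det_similar (R : comUnitRingType) m (A B P : 'M[R]_m) :
  P \in unitmx -> A *m P = P *m B -> \det A = \det B.
Proof.
rewrite unitmxE => uP /(congr1 determinant); rewrite !det_mulmx mulrC.
exact: mulrI.
Qed.

Section CharacterTable.

Variables (gT : finGroupType) (G : {group gT}).

Local Notation X := (character_table G).

Lemma row0_character_table : row 0 X = const_mx 1.
Proof.
apply/rowP=> j; rewrite !mxE irr0 cfun1E.
by case/repr_classesP: (irr_classP j) => ->.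
Qed.

Lemma character_table_mul_class_density :
  X *m \col_j (#|irr_class j|%:R / #|G|%:R) = delta_mx 0 0.
Proof.
apply/matrixP=> i j; rewrite ord1 !mxE andbT.
have := cfdot_irr i 0; rewrite cfdotE irr0 => <-; rewrite mulrC mulr_suml.
rewrite sum_by_classes => [|g h Gg Gh]; last by rewrite !cfunJ.
rewrite reindex_irr_class; apply: eq_bigr => k _.
case/repr_classesP: (irr_classP k) => Gk _.
by rewrite !mxE cfun1E Gk conjC1 mulr1 mulrCA.
Qed.

Lemma irr_class_eq_class1 j :
  (irr_class j == 1 ^: G)%g = (j == class_Iirr G (1 ^: G)%g).
Proof. by rewrite -(inj_eq (can_inj irr_classK)) class_IirrK ?mem_classes. Qed.

End CharacterTable.

Section McKayCartanDeterminant.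

Variables (gT : finGroupType) (G : {group gT}) (n : nat).
Variables (rG : mx_representation algC G n) (M : 'M[int]_(Nirr G)).
Hypothesis HM : forall i : Iirr G,
  cfRepr rG * 'chi_i = \sum_(j < Nirr G) (M i j)%:~R *: 'chi_j.

Local Notation X := (character_table G).
Let Ct : 'M[algC]_(Nirr G) := map_mx intr (ext_mckay_cartan n M).
Let lam : 'rV[algC]_(Nirr G) := \row_j (n%:R - cfRepr rG (repr (@irr_class _ G j))).

Lemma ext_mckay_cartan_mul_character_table : Ct *m X = X *m diag_mx lam.
Proof.
apply/matrixP=> i j; rewrite mul_mx_diag /Ct /ext_mckay_cartan map_mxB /=.
rewrite mulmxBl map_scalar_mx mul_scalar_mx !mxE mulrBr [X in _ = X - _]mulrC.
congr (_ - _); have := congr1 (fun f : 'CF(G) => f (repr (irr_class j))) (HM i).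
rewrite cfunE sum_cfunE mulrC => ->; apply: eq_bigr => k _.
by rewrite !mxE cfunE.
Qed.

Let k1 := class_Iirr G (1 ^: G)%g.

Let lam_class1 : lam 0 k1 = 0.
Proof.
by rewrite mxE class_IirrK ?mem_classes // class1G repr_set1 cfRepr1 subrr.
Qed.

Lemma det_ext_mckay_cartan : \det Ct = 0.
Proof.
rewrite (det_similar (character_table_unit G) ext_mckay_cartan_mul_character_table).
by rewrite det_diag (bigD1 k1) //= lam_class1 mul0r.
Qed.

Lemma det_ext_mckay_cartan_add_e00 :
  \det (Ct + delta_mx 0 0) =
    #|G|%:R^-1 * \prod_(xG in classes G | xG != (1 ^: G)%g) (n%:R - cfRepr rG (repr xG)).
Proof.
pose u : 'cV[algC]_(Nirr G) := \col_j (#|@irr_class _ G j|%:R / #|G|%:R).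
have e00_X : delta_mx 0 0 *m X = X *m (u *m const_mx 1).
  rewrite mulmxA character_table_mul_class_density -row0_character_table rowE.
  by rewrite mulmxA mul_delta_mx.
have /(det_similar (character_table_unit G)) -> :
    (Ct + delta_mx 0 0) *m X = X *m (diag_mx lam + u *m const_mx 1).
  by rewrite mulmxDl ext_mckay_cartan_mul_character_table e00_X -mulmxDr.
rewrite (det_diag_mx_add_rank1 _ _ lam_class1) !mxE class_IirrK ?mem_classes //.
rewrite class1G cards1 mul1r mulr1 big_mkcondr reindex_irr_class big_mkcond /=.
congr (_ * _); apply: eq_bigr => j _.
by rewrite -(class1G G) irr_class_eq_class1 mxE.
Qed.

Lemma det_mckay_cartan :
  (\det (mckay_cartan n M))%:~R =
    #|G|%:R^-1 * \prod_(xG in classes G | xG != (1 ^: G)%g) (n%:R - cfRepr rG (repr xG)).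
Proof.
rewrite -det_map_mx; have -> : map_mx intr (mckay_cartan n M) = delete0 Ct.
  by apply/matrixP => i j; rewrite !mxE.
by rewrite det_delete0 det_ext_mckay_cartan subr0 det_ext_mckay_cartan_add_e00.
Qed.

End McKayCartanDeterminant.

Section ConjugationStableProduct.

Variables (T : finType) (D : {set T}) (sig : T -> T) (f : T -> algC).
Hypotheses (sigD : {in D, forall a, sig a \in D}) (sigK : {in D, involutive sig}).
Hypotheses (f_sig : {in D, forall a, f (sig a) = (f a)^*}).
Hypotheses (f_neq0 : {in D, forall a, f a != 0}).
Hypotheses (Re_f_ge0 : {in D, forall a, 0 <= 'Re (f a)}).

Lemma prod_orbit_gt0 a : a \in D -> 0 < \prod_(b in [set a; sig a]) f b.
Proof.
move=> Da; have [fix_a|nfix_a] := eqVneq (sig a) a.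
  rewrite fix_a setUid big_set1 lt_def f_neq0 //=.
  have /CrealP/Creal_ReP <- : (f a)^* = f a by rewrite -f_sig ?fix_a.
  exact: Re_f_ge0.
rewrite big_setU1 ?inE 1?eq_sym //= big_set1 f_sig //.
by rewrite mul_conjC_gt0 f_neq0.
Qed.

Lemma prod_conj_stable_gt0 : 0 < \prod_(a in D) f a.
Proof.
suff: forall S : {set T}, S \subset D -> {in S, forall a, sig a \in S} ->
  0 < \prod_(a in S) f a.
  by apply; rewrite ?subxx.
move=> S; have [k] := ubnP #|S|; elim: k S => // k IH S ltSk sSD sigS.
have [->|[a Sa]] := set_0Vmem S; first by rewrite big_set0 ltr01.
pose O := [set a; sig a].
have sOS : O \subset S by apply/subsetP=> b; rewrite !inE => /orP[]/eqP->; rewrite ?sigS.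
rewrite (big_setID O) (setIidPr sOS) /= mulr_gt0 ?prod_orbit_gt0 ?(subsetP sSD) //.
have Oa : a \in O by rewrite !inE eqxx.
apply: IH => [||b].
- rewrite cardsD (setIidPr sOS) -ltnS (leq_trans _ ltSk) // ltnS ltn_subrL.
  by apply/andP; split; apply/card_gt0P; exists a.
- exact: subset_trans (subsetDl S O) sSD.
- rewrite !inE => /andP[ObN Sb]; rewrite sigS // andbT; apply: contra ObN.
  have Db := subsetP sSD b Sb; have Da := subsetP sSD a Sa.
  by move=> /orP[]/eqP sb; rewrite -(sigK Db) sb ?sigK ?eqxx ?orbT.
Qed.

End ConjugationStableProduct.

Lemma char1_ge_Re (gT : finGroupType) (G : {group gT}) (chi : 'CF(G)) x :
  chi \is a character -> 'Re (chi x) <= chi 1%g.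
Proof. by move=> Nchi; apply: le_trans (leif_Re_Creal _).1 (char1_ge_norm x Nchi). Qed.

Lemma cfun_class_repr (gT : finGroupType) (G : {group gT}) (phi : 'CF(G)) xG x :
  xG \in classes G -> x \in xG -> phi (repr xG) = phi x.
Proof. by case/imsetP=> y _ -> /class_eqP <-; apply: cfun_repr. Qed.

Section FaithfulRepresentation.

Variables (gT : finGroupType) (G : {group gT}) (n : nat).
Variable rG : mx_representation algC G n.
Hypothesis faithful_rG : mx_faithful rG.

Local Notation phi := (cfRepr rG).

Lemma faithful_cfRepr_eq_deg g : g \in G -> phi g = n%:R -> g = 1%g.
Proof.
move=> Gg phi_g; have: g \in cfker phi.
  by rewrite cfkerEchar ?cfRepr_char // inE Gg cfRepr1 phi_g eqxx.
by rewrite cfker_repr => /(subsetP faithful_rG)/set1P.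
Qed.

Lemma prod_nontrivial_classes_gt0 :
  0 < \prod_(xG in classes G | xG != (1 ^: G)%g) (n%:R - phi (repr xG)).
Proof.
pose D := [set xG in classes G | xG != (1 ^: G)%g].
rewrite (eq_bigl (mem D)); last by move=> xG; rewrite /= inE.
have classV xG : xG \in classes G -> (xG^-1)%g \in classes G.
  by case/imsetP=> y Gy ->; rewrite -classVg mem_classes ?groupV.
apply: (@prod_conj_stable_gt0 _ _ (fun A => A^-1)%g) => xG; rewrite inE => /andP[GxG ntxG].
- rewrite inE classV //=; apply: contra ntxG => /eqP xGV1.
  by rewrite -[xG]invgK xGV1 -classVg invg1.
- exact: invgK.
- rewrite rmorphB /= conjC_nat; congr (_ - _).
  have := mem_repr_classes (classV _ GxG); rewrite mem_invg => /(cfun_class_repr phi GxG)->.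
  by rewrite char_inv ?cfRepr_char // conjCK.
- rewrite subr_eq0 eq_sym; apply: contra ntxG => /eqP /faithful_cfRepr_eq_deg.
  by case/repr_classesP: GxG => Gr xGE /(_ Gr) r1; rewrite xGE r1.
- have /Creal_ReP Re_n : (n%:R : algC) \is Num.real by rewrite realn.
  by rewrite raddfB /= Re_n subr_ge0 -(cfRepr1 rG) char1_ge_Re ?cfRepr_char.
Qed.

End FaithfulRepresentation.

Unset Implicit Arguments.
Set Strict Implicit.

Theorem theorem1 (gT : finGroupType) (G : {group gT}) (n : nat)
    (rG : mx_representation algC G n) (Hfaithful : mx_faithful rG)
    (M : 'M[int]_(Nirr G))
    (HM : forall i : Iirr G,
        cfRepr rG * 'chi_i = \sum_(j < Nirr G) (M i j)%:~R *: 'chi_j)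
    (c : {set gT} -> gT)
    (Hc : forall xG, xG \in classes G -> c xG \in xG) :
  exists k : nat,
    [/\ (0 < k)%N,
        coker_order (mckay_cartan n M)^T k &
        (#|G|%:R)^-1 *
          \prod_(xG in classes G | xG != ((1 : gT) ^: G)%g) (n%:R - cfRepr rG (c xG))
        = k%:R :> algC].
Proof.
set P := \prod_(xG in classes G | _) _.
have P_repr : P = \prod_(xG in classes G | xG != (1 ^: G)%g) (n%:R - cfRepr rG (repr xG)).
  by apply: eq_bigr => xG /andP[GxG _]; rewrite (cfun_class_repr _ GxG (Hc _ GxG)).
have detC : (\det (mckay_cartan n M))%:~R = #|G|%:R^-1 * P.
  by rewrite P_repr (det_mckay_cartan HM).
have detC_gt0 : 0 < \det (mckay_cartan n M).
  rewrite -(ltr0z algC) detC mulr_gt0 ?invr_gt0 ?ltr0n ?cardG_gt0 //.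
  by rewrite P_repr prod_nontrivial_classes_gt0.
exists `|\det (mckay_cartan n M)|%N; split.
- by rewrite absz_gt0 gt_eqF.
- by rewrite -det_tr; apply: coker_order_det; rewrite det_tr gt_eqF.
by rewrite -detC -[in LHS](gez0_abs (ltW detC_gt0)).
Qed.
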